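(* Let $b_0,g_3,z_0$ be complex constants and let $R(z)=\wp(z-z_0;0,g_3)$, so that $R_z^2=4R^3-g_3$. Then the function $$y(z)=-b_0+\frac{R_z}{R}$$ is a solution of the second order ordinary differential equation $$y_{zz}+yy_z-y^3+b_0y_z-3b_0y^2-3b_0^2y-b_0^3=0 .$$
   Context: $\wp(z;g_2,g_3)$ denotes the Weierstrass elliptic function with invariants $g_2,g_3$, the general solution (up to translation of $z$) of $R_z^2-4R^3+g_2R+g_3=0$; subscripts $z$ denote derivatives with respect to $z$. *)

From Stdlib Require Import Reals.
From Coquelicot Require Import Coquelicot.

Definition holo_on (U : C -> Prop) (f : C -> C) : Prop :=
  exists F : nat -> C -> C, F 0%nat = f /\
    forall (n : nat) (z : C), U z ->
      is_derive (K := C_AbsRing) (V := C_NormedModule) (F n) z (F (S n) z).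

Definition cderiv (f : C -> C) (z l : C) : Prop :=
  is_derive (K := C_AbsRing) (V := C_NormedModule) f z l.

(* Put w = y + b0 = R'/R.  The equation becomes w'' + w w' - w^3 = 0, and a direct
   computation gives w'' + w w' - w^3 = (R R''' - 2 R' R'') / R^2.  Differentiating
   R'^2 = 4 R^3 - g3 gives R' (R'' - 6 R^2) = 0, so where R' <> 0 we get R'' = 6 R^2 and
   R''' = 12 R R', whence R R''' = 2 R' R''.  At the zeros of R' the same relation follows
   pointwise from two further derivatives of R' (R'' - 6 R^2) = 0, which avoids any appeal
   to the identity theorem. *)

From Stdlib Require Import Reals Lra.
From Coquelicot Require Import Coquelicot.
Open Scope C_scope.

Lemma Cmult_eq0_r (x y : C) : x <> 0 -> x * y = 0 -> y = 0.
Proof.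
  intros Hx Hxy.
  replace y with (/ x * (x * y)) by (field; exact Hx).
  rewrite Hxy. ring.
Qed.

Lemma Cmult_neq0 (x y : C) : x <> 0 -> y <> 0 -> x * y <> 0.
Proof. intros Hx Hy Hxy. exact (Hy (Cmult_eq0_r x y Hx Hxy)). Qed.

Lemma RtoC_neq0 (x : R) : x <> 0%R -> RtoC x <> 0.
Proof. intros Hx E. exact (Hx (RtoC_inj _ _ E)). Qed.

Lemma Cinv_taylor_bound (w y : C) : w <> 0 -> (Cmod (y - w) <= Cmod w / 2)%R ->
  (Cmod (/ y - / w + (y - w) / (w * w))
     <= 2 * Cmod (y - w) * Cmod (y - w) / Cmod w ^ 3)%R.
Proof.
  intros Hw Hyw.
  assert (Hmw : (0 < Cmod w)%R) by (apply Cmod_gt_0; exact Hw).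
  assert (Hmy : (Cmod w / 2 <= Cmod y)%R).
  { assert (T := Cmod_triangle (w - y) y).
    replace (w - y + y) with w in T by ring.
    replace (w - y) with (- (y - w)) in T by ring.
    rewrite Cmod_opp in T. lra. }
  assert (Hy : y <> 0) by (intros ->; rewrite Cmod_0 in Hmy; lra).
  replace (/ y - / w + (y - w) / (w * w))
    with ((y - w) * (y - w) / (y * (w * w))) by (field; split; assumption).
  rewrite Cmod_div by (repeat apply Cmult_neq0; assumption).
  rewrite !Cmod_mult.
  set (d := Cmod (y - w)) in *. set (a := Cmod y) in *. set (b := Cmod w) in *.
  assert (Hinv : (/ (a * (b * b)) <= / (b ^ 3 / 2))%R).
  { apply Rinv_le_contravar; [apply Rdiv_lt_0_compat; [apply pow_lt|]; lra | nra]. }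
  unfold Rdiv. replace (2 * d * d * / b ^ 3)%R with (d * d * / (b ^ 3 / 2))%R by (field; lra).
  apply Rmult_le_compat_l; [nra | exact Hinv].
Qed.

Lemma cderiv_Cinv (w : C) : w <> 0 -> cderiv Cinv w (- / (w * w)).
Proof.
  intros Hw. split; [apply is_linear_scal_l|].
  intros x Hx.
  assert (Ex : w = x)
    by exact (is_filter_lim_locally_unique (K := C_AbsRing)
                (V := AbsRing_NormedModule C_AbsRing) _ _ Hx).
  subst x. intros [eps Heps]. cbn [pos].
  assert (Hmw : (0 < Cmod w)%R) by (apply Cmod_gt_0; exact Hw).
  set (M := (Cmod w ^ 3)%R).
  assert (HM : (0 < M)%R) by (apply pow_lt; exact Hmw).
  assert (Hdelta : (0 < Rmin (Cmod w / 2) (eps * M / 2))%R) by (apply Rmin_pos; nra).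
  eapply filter_imp;
    [|exact (locally_ball_norm (V := AbsRing_NormedModule C_AbsRing) w (mkposreal _ Hdelta))].
  intros y Hy. unfold ball_norm in Hy. cbn [pos] in Hy.
  change (@norm _ _ ?u) with (Cmod u) in *.
  change (minus y w) with (y - w) in *.
  change (minus (minus (/ y) (/ w)) (scal (y - w) (- / (w * w))))
    with (/ y - / w - (y - w) * (- / (w * w))).
  replace (/ y - / w - (y - w) * (- / (w * w)))
    with (/ y - / w + (y - w) / (w * w)) by (unfold Cdiv; ring).
  assert (Hd1 := Rmin_l (Cmod w / 2) (eps * M / 2)).
  assert (Hd2 := Rmin_r (Cmod w / 2) (eps * M / 2)).
  assert (Hbound : (Cmod (/ y - / w + (y - w) / (w * w))
                      <= 2 * Cmod (y - w) * Cmod (y - w) / M)%R)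
    by (apply Cinv_taylor_bound; [exact Hw | lra]).
  apply (Rle_trans _ _ _ Hbound).
  assert (0 <= Cmod (y - w))%R by apply Cmod_ge_0.
  replace (eps * Cmod (y - w))%R with (eps * M * Cmod (y - w) / M)%R by (field; lra).
  apply Rmult_le_compat_r; [apply Rlt_le, Rinv_0_lt_compat, HM | nra].
Qed.

Lemma cderiv_iff_AbsRing (f : C -> C) (z l : C) :
  cderiv f z l <-> is_derive (K := C_AbsRing) (V := AbsRing_NormedModule C_AbsRing) f z l.
Proof. split; intros [_ Hd]; (split; [apply is_linear_scal_l | exact Hd]). Qed.

Lemma cderiv_eq (f : C -> C) (z l l' : C) : cderiv f z l -> l = l' -> cderiv f z l'.
Proof. intros H <-. exact H. Qed.

Lemma cderiv_unique (f : C -> C) (z l l' : C) : cderiv f z l -> cderiv f z l' -> l = l'.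
Proof.
  intros H H'. rewrite <- (is_C_derive_unique f z l H). exact (is_C_derive_unique f z l' H').
Qed.

Lemma cderiv_ext_on (U : C -> Prop) (f g : C -> C) (z l : C) :
  open U -> U z -> (forall t, U t -> f t = g t) -> cderiv f z l -> cderiv g z l.
Proof.
  intros HU Hz Efg. apply is_derive_ext_loc.
  apply locally_C. exact (filter_imp U _ Efg (HU z Hz)).
Qed.

Lemma cderiv_const (c z : C) : cderiv (fun _ => c) z 0.
Proof. exact (is_derive_const (K := C_AbsRing) (V := C_NormedModule) c z). Qed.

Lemma cderiv_plus (f g : C -> C) (z a b : C) : cderiv f z a -> cderiv g z b ->
  cderiv (fun t => f t + g t) z (a + b).
Proof. exact (is_derive_plus f g z a b). Qed.

Lemma cderiv_minus (f g : C -> C) (z a b : C) : cderiv f z a -> cderiv g z b ->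
  cderiv (fun t => f t - g t) z (a - b).
Proof. exact (is_derive_minus f g z a b). Qed.

Lemma cderiv_mult (f g : C -> C) (z a b : C) : cderiv f z a -> cderiv g z b ->
  cderiv (fun t => f t * g t) z (a * g z + f z * b).
Proof.
  intros Ha%cderiv_iff_AbsRing Hb%cderiv_iff_AbsRing.
  apply cderiv_iff_AbsRing. exact (is_derive_mult f g z a b Ha Hb Cmult_comm).
Qed.

Lemma cderiv_comp (f g : C -> C) (z a b : C) : cderiv f (g z) a -> cderiv g z b ->
  cderiv (fun t => f (g t)) z (b * a).
Proof. intros Ha Hb%cderiv_iff_AbsRing. exact (is_derive_comp f g z a b Ha Hb). Qed.

Lemma cderiv_inv (g : C -> C) (z b : C) : cderiv g z b -> g z <> 0 ->
  cderiv (fun t => / g t) z (- b / (g z * g z)).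
Proof.
  intros Hb Hg. eapply cderiv_eq.
  - exact (cderiv_comp Cinv g z _ b (cderiv_Cinv _ Hg) Hb).
  - unfold Cdiv. ring.
Qed.

Lemma cderiv_div (f g : C -> C) (z a b : C) : cderiv f z a -> cderiv g z b -> g z <> 0 ->
  cderiv (fun t => f t / g t) z ((a * g z - f z * b) / (g z * g z)).
Proof.
  intros Ha Hb Hg. eapply cderiv_eq.
  - exact (cderiv_mult f (fun t => / g t) z a _ Ha (cderiv_inv g z b Hb Hg)).
  - cbv beta. field. exact Hg.
Qed.

Lemma cderiv_vanishing (U : C -> Prop) (f : C -> C) (z l : C) :
  open U -> (forall t, U t -> f t = 0) -> U z -> cderiv f z l -> l = 0.
Proof.
  intros HU Hf Hz Hl. apply (cderiv_unique f z); [exact Hl|].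
  apply (cderiv_ext_on U (fun _ => 0)); [exact HU | exact Hz | | apply cderiv_const].
  intros t Ht. symmetry. exact (Hf t Ht).
Qed.

Ltac cderiv_poly :=
  match goal with
  | |- cderiv (fun t => @?f t + @?g t) _ _ => apply (cderiv_plus f g); cderiv_poly
  | |- cderiv (fun t => @?f t - @?g t) _ _ => apply (cderiv_minus f g); cderiv_poly
  | |- cderiv (fun t => @?f t * @?g t) _ _ => apply (cderiv_mult f g); cderiv_poly
  | |- cderiv (fun _ => ?c) _ _ => apply cderiv_const
  | |- _ => solve [eauto]
  end.

Lemma holo_on_cderiv (U : C -> Prop) (f : C -> C) :
  holo_on U f -> exists f' : C -> C, forall z, U z -> cderiv f z (f' z).
Proof. intros [F [<- HF]]. exists (F 1%nat). exact (HF 0%nat). Qed.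

Lemma holo_on_deriv (U : C -> Prop) (f f' : C -> C) :
  open U -> holo_on U f -> (forall z, U z -> cderiv f z (f' z)) -> holo_on U f'.
Proof.
  intros HU [F [HF0 HF]] Hf'.
  exists (fun n => match n with O => f' | S m => F (S (S m)) end).
  split; [reflexivity|].
  intros [|n] z Hz; [|exact (HF (S (S n)) z Hz)].
  apply (cderiv_ext_on U (F 1%nat)); [exact HU | exact Hz | | exact (HF 1%nat z Hz)].
  intros t Ht. apply (cderiv_unique f t); [subst f; exact (HF 0%nat t Ht) | exact (Hf' t Ht)].
Qed.

(* With h = a - 6 r^2 the hypotheses are s h = 0 and its first two derivatives along the
   jet (r, s, a, b, c) of R.  If s <> 0 they give h = 0 and h' = 0; if s = 0, the third one
   forces b = 0 unless a = 2 r^2, which contradicts a h = 0 since r <> 0. *)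
Lemma wp_jet_relation (r s a b c : C) : r <> 0 ->
  s * (a - 6 * (r * r)) = 0 ->
  a * (a - 6 * (r * r)) + s * (b - 12 * r * s) = 0 ->
  b * (a - 6 * (r * r)) + 2 * a * (b - 12 * r * s) + s * (c - 12 * s * s - 12 * r * a) = 0 ->
  r * b = 2 * s * a.
Proof.
  intros Hr H1 H2 H3.
  destruct (Ceq_dec s 0) as [-> | Hs].
  - destruct (Ceq_dec b 0) as [-> | Hb]; [ring | exfalso].
    assert (Hk : a - 2 * (r * r) = 0).
    { apply (Cmult_eq0_r (3 * b)); [apply Cmult_neq0; [apply RtoC_neq0; lra | exact Hb]|].
      rewrite <- H3. ring. }
    apply (Cmult_neq0 8 (r * r * (r * r)));
      [apply RtoC_neq0; lra | repeat apply Cmult_neq0; exact Hr |].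
    transitivity ((a - 2 * (r * r)) * (a - 4 * (r * r)) - a * (a - 6 * (r * r))); [ring|].
    assert (Ha : a * (a - 6 * (r * r)) = 0) by (rewrite <- H2; ring).
    rewrite Hk, Ha. ring.
  - assert (Ha : a - 6 * (r * r) = 0) by exact (Cmult_eq0_r s _ Hs H1).
    assert (Hb : b - 12 * r * s = 0).
    { apply (Cmult_eq0_r s); [exact Hs|]. rewrite <- H2, Ha. ring. }
    replace (r * b) with (2 * s * a + r * (b - 12 * r * s) - 2 * s * (a - 6 * (r * r)))
      by ring.
    rewrite Ha, Hb. ring.
Qed.

Lemma wp_third_derivative (U : C -> Prop) (g3 : C) (R S A B D : C -> C) : open U ->
  (forall z, U z -> cderiv R z (S z)) -> (forall z, U z -> cderiv S z (A z)) ->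
  (forall z, U z -> cderiv A z (B z)) -> (forall z, U z -> cderiv B z (D z)) ->
  (forall z, U z -> S z * S z = 4 * (R z * R z * R z) - g3) ->
  (forall z, U z -> R z <> 0) ->
  forall z, U z -> R z * B z = 2 * S z * A z.
Proof.
  intros HU HR HS HA HB Hwp HR0.
  assert (E1 : forall z, U z -> S z * (A z - 6 * (R z * R z)) = 0).
  { intros z Hz. apply (Cmult_eq0_r 2); [apply RtoC_neq0; lra|].
    apply (cderiv_vanishing U (fun t => S t * S t - (4 * (R t * R t * R t) - g3)) z);
      [exact HU | intros t Ht; rewrite Hwp by exact Ht; ring | exact Hz |].
    eapply cderiv_eq; [cderiv_poly | ring]. }
  assert (E2 : forall z, U z ->
    A z * (A z - 6 * (R z * R z)) + S z * (B z - 12 * R z * S z) = 0).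
  { intros z Hz.
    apply (cderiv_vanishing U (fun t => S t * (A t - 6 * (R t * R t))) z _ HU E1 Hz).
    eapply cderiv_eq; [cderiv_poly | ring]. }
  intros z Hz. apply (wp_jet_relation _ _ _ _ (D z) (HR0 z Hz) (E1 z Hz) (E2 z Hz)).
  apply (cderiv_vanishing U
    (fun t => A t * (A t - 6 * (R t * R t)) + S t * (B t - 12 * R t * S t)) z _ HU E2 Hz).
  eapply cderiv_eq; [cderiv_poly | ring].
Qed.

(* (S/R)' and (S/R)'' when R' = S, S' = A, A' = B, in terms of the values r, s, a, b. *)
Definition logderiv1 (r s a : C) : C := (a * r - s * s) / (r * r).

Definition logderiv2 (r s a b : C) : C :=
  (b * (r * r) - 3 * a * r * s + 2 * (s * s * s)) / (r * r * r).

Lemma cderiv_logderiv (R S A : C -> C) (z : C) : R z <> 0 ->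
  cderiv R z (S z) -> cderiv S z (A z) ->
  cderiv (fun t => S t / R t) z (logderiv1 (R z) (S z) (A z)).
Proof.
  intros HR0 HR HS. eapply cderiv_eq.
  - exact (cderiv_div S R z _ _ HS HR HR0).
  - unfold logderiv1. field. exact HR0.
Qed.

Lemma cderiv_logderiv1 (R S A B : C -> C) (z : C) : R z <> 0 ->
  cderiv R z (S z) -> cderiv S z (A z) -> cderiv A z (B z) ->
  cderiv (fun t => logderiv1 (R t) (S t) (A t)) z (logderiv2 (R z) (S z) (A z) (B z)).
Proof.
  intros HR0 HR HS HA. unfold logderiv1. eapply cderiv_eq.
  - apply cderiv_div; [cderiv_poly | cderiv_poly | apply Cmult_neq0; exact HR0].
  - unfold logderiv2. field. exact HR0.
Qed.

Lemma logderiv_riccati (r s a b : C) : r <> 0 ->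
  logderiv2 r s a b + s / r * logderiv1 r s a - s / r * (s / r) * (s / r)
  = (r * b - 2 * s * a) / (r * r).
Proof. intros Hr. unfold logderiv1, logderiv2. field. exact Hr. Qed.

Lemma ode_shift (b0 w w1 w2 : C) :
  w2 + (- b0 + w) * w1 - (- b0 + w) * (- b0 + w) * (- b0 + w) + b0 * w1
    - 3 * b0 * ((- b0 + w) * (- b0 + w)) - 3 * (b0 * b0) * (- b0 + w) - b0 * b0 * b0
  = w2 + w * w1 - w * w * w.
Proof. ring. Qed.

Theorem mainTheorem2 (b0 g3 : C) (U : C -> Prop) (R Rz : C -> C) :
  open U ->
  holo_on U R ->
  (forall z, U z -> cderiv R z (Rz z)) ->
  (forall z, U z -> Rz z * Rz z = 4 * (R z * R z * R z) - g3) ->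
  (forall z, U z -> R z <> 0) ->
  let y := fun z => - b0 + Rz z / R z in
  exists y1 y2 : C -> C,
    forall z, U z ->
      cderiv y z (y1 z) /\ cderiv y1 z (y2 z) /\
      y2 z + y z * y1 z - y z * y z * y z + b0 * y1 z
        - 3 * b0 * (y z * y z) - 3 * (b0 * b0) * y z - b0 * b0 * b0 = 0.
Proof.
  intros HU HR HRz Hwp HR0 y.
  pose proof (holo_on_deriv U R Rz HU HR HRz) as HRz_holo.
  destruct (holo_on_cderiv U Rz HRz_holo) as [A HA].
  pose proof (holo_on_deriv U Rz A HU HRz_holo HA) as HA_holo.
  destruct (holo_on_cderiv U A HA_holo) as [B HB].
  destruct (holo_on_cderiv U B (holo_on_deriv U A B HU HA_holo HB)) as [D HD].
  pose proof (wp_third_derivative U g3 R Rz A B D HU HRz HA HB HD Hwp HR0) as Hjet.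
  exists (fun z => logderiv1 (R z) (Rz z) (A z)).
  exists (fun z => logderiv2 (R z) (Rz z) (A z) (B z)).
  intros z Hz. split; [|split].
  - eapply cderiv_eq.
    + apply cderiv_plus; [apply cderiv_const|].
      exact (cderiv_logderiv R Rz A z (HR0 z Hz) (HRz z Hz) (HA z Hz)).
    + ring.
  - exact (cderiv_logderiv1 R Rz A B z (HR0 z Hz) (HRz z Hz) (HA z Hz) (HB z Hz)).
  - unfold y. rewrite ode_shift, logderiv_riccati, Hjet by auto.
    unfold Cdiv. ring.
Qed.
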